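(* Let $S=(n,\phi,F)$ be a semicoherent system whose joint lifetime distribution $F$ has no ties, and let $T$ be the system lifetime. Then for every $j\in[n]$, $$I_{\mathrm{BP}}^{(j)}:=\Pr(T=X_j)=\sum_{A\subseteq[n]\setminus\{j\}}q_j(A)\,\big(\phi(A\cup\{j\})-\phi(A)\big)=\sum_{A\subseteq[n]}(-1)^{|\{j\}\setminus A|}\,q_j(A\setminus\{j\})\,\phi(A).$$
   Context: $[n]=\{1,\ldots,n\}$. Boolean vectors $\mathbf{x}\in\{0,1\}^n$ are identified with subsets $A\subseteq[n]$ via $x_i=1\iff i\in A$, so $\phi$ is viewed both as a function on $\{0,1\}^n$ and on $2^{[n]}$. A semicoherent system $S=(n,\phi,F)$ consists of a structure function $\phi:\{0,1\}^n\to\{0,1\}$ that is nondecreasing in each variable with $\phi(\varnothing)=0$, $\phi([n])=1$, and the joint c.d.f. $F$ of nonnegative component lifetimes $X_1,\ldots,X_n$. $F$ has no ties if $\Pr(X_i=X_k)=0$ for all $i\neq k$. At time $t$ component $i$ is working iff $X_i>t$; the system lifetime is $T=\inf\{t\geq0:\phi(\{i: X_i>t\})=0\}$. For $j\in[n]$, $A\subseteq[n]\setminus\{j\}$: $q_j(A)=\Pr\big(\max_{i\notin A\cup\{j\}}X_i<X_j<\min_{i\in A}X_i\big)$ (max over empty set $=-\infty$, min over empty set $=+\infty$). *)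

From Stdlib Require Import Reals.
From mathcomp Require Import all_boot.
Set Implicit Arguments. Unset Strict Implicit. Unset Printing Implicit Defensive.

Definition sigma_algebra (Omega : Type) (Ev : (Omega -> Prop) -> Prop) : Prop :=
  Ev (fun _ => True) /\
  (forall E, Ev E -> Ev (fun w => ~ E w)) /\
  (forall E : nat -> Omega -> Prop, (forall k, Ev (E k)) ->
     Ev (fun w => exists k, E k w)).

Definition probability (Omega : Type) (Ev : (Omega -> Prop) -> Prop)
  (P : (Omega -> Prop) -> R) : Prop :=
  sigma_algebra Ev /\
  (forall E, Ev E -> Rle 0 (P E)) /\
  P (fun _ => True) = R1 /\
  (forall E : nat -> Omega -> Prop,
     (forall k, Ev (E k)) ->
     (forall k l w, k <> l -> E k w -> E l w -> False) ->
     infinite_sum (fun k => P (E k)) (P (fun w => exists k, E k w))).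

Definition random_variable (Omega : Type) (Ev : (Omega -> Prop) -> Prop)
  (Y : Omega -> R) : Prop :=
  forall t : R, Ev (fun w => Rle (Y w) t).

Definition no_ties (Omega : Type) (P : (Omega -> Prop) -> R) (n : nat)
  (X : 'I_n -> Omega -> R) : Prop :=
  forall i k : 'I_n, i <> k -> P (fun w => X i w = X k w) = R0.

Definition semicoherent (n : nat) (phi : {set 'I_n} -> bool) : Prop :=
  (forall A B : {set 'I_n}, A \subset B -> phi A -> phi B) /\
  phi set0 = false /\ phi setT = true.

Definition b2R (b : bool) : R := if b then R1 else R0.

Definition is_glb (S : R -> Prop) (m : R) : Prop :=
  (forall t, S t -> Rle m t) /\
  (forall m', (forall t, S t -> Rle m' t) -> Rle m' m).

Definition failed_times (Omega : Type) (n : nat) (phi : {set 'I_n} -> bool)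
  (X : 'I_n -> Omega -> R) (w : Omega) : R -> Prop :=
  fun t => Rle R0 t /\
    phi [set i : 'I_n | Rlt_dec t (X i w) : bool] = false.

(* T(w) = inf {t >= 0 : phi({i : X_i(w) > t}) = 0};  "T = y" *)
Definition lifetime_is (Omega : Type) (n : nat) (phi : {set 'I_n} -> bool)
  (X : 'I_n -> Omega -> R) (w : Omega) (y : R) : Prop :=
  is_glb (failed_times phi X w) y.

Definition q (Omega : Type) (P : (Omega -> Prop) -> R) (n : nat)
  (X : 'I_n -> Omega -> R) (j : 'I_n) (A : {set 'I_n}) : R :=
  P (fun w => (forall i, i \notin A -> i != j -> Rlt (X i w) (X j w)) /\
              (forall i, i \in A -> Rlt (X j w) (X i w))).

(* Everything in the statement depends on an outcome w only through its order
   pattern: the truth values of all strict comparisons among X_1(w), ..., X_n(w) and 0.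
   There are finitely many patterns and each fibre {pattern = p} is an event, so every
   pattern-invariant set is a finite disjoint union of fibres and its probability is the
   sum of the probabilities of its "cells" (fibre intersected with the set).  The first
   formula is then checked cell by cell:
   - a pattern with a tie at j is null, because ties have probability 0;
   - on an untied pattern, exactly one q_j-event occurs, for A the set of components
     outliving j, and T = X_j holds iff phi(A + j) = 1 and phi(A) = 0.
   Summing over patterns and exchanging the two finite sums gives the first formula; the
   second one is a reindexing of the sum over subsets (A <-> A + j). *)
From Stdlib Require Import Reals Lra Classical FunctionalExtensionality PropExtensionality.
From HB Require Import structures.
From mathcomp Require Import all_boot.
Set Implicit Arguments. Unset Strict Implicit. Unset Printing Implicit Defensive.
Open Scope R_scope.

Lemma pred_ext (T : Type) (E F : T -> Prop) : (forall w, E w <-> F w) -> E = F.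
Proof.
by move=> h; apply: functional_extensionality => w; apply: propositional_extensionality.
Qed.

Section Events.
Variables (Omega : Type) (Ev : (Omega -> Prop) -> Prop).
Hypothesis sigmaEv : sigma_algebra Ev.

Lemma event_ext (E F : Omega -> Prop) : (forall w, E w <-> F w) -> Ev E -> Ev F.
Proof. by move=> h; rewrite (pred_ext h). Qed.

Lemma event_True : Ev (fun _ => True).
Proof. by case: sigmaEv. Qed.

Lemma event_not (E : Omega -> Prop) : Ev E -> Ev (fun w => ~ E w).
Proof. by case: sigmaEv => _ [h _]; apply: h. Qed.

Lemma event_exists (E : nat -> Omega -> Prop) :
  (forall k, Ev (E k)) -> Ev (fun w => exists k, E k w).
Proof. by case: sigmaEv => _ [_ h]; apply: h. Qed.

Lemma event_False : Ev (fun _ => False).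
Proof. by apply: (event_ext _ (event_not event_True)) => w; tauto. Qed.

Lemma event_or (A B : Omega -> Prop) : Ev A -> Ev B -> Ev (fun w => A w \/ B w).
Proof.
move=> hA hB; pose E k := if k is 0%N then A else B.
apply: (event_ext _ (@event_exists E _)); last by case.
move=> w; split; first by case=> [[|k]] h; [left|right].
by case=> h; [exists 0%N | exists 1%N].
Qed.

Lemma event_and (A B : Omega -> Prop) : Ev A -> Ev B -> Ev (fun w => A w /\ B w).
Proof.
move=> hA hB; apply: (event_ext _ (event_not (event_or (event_not hA) (event_not hB)))).
by move=> w; tauto.
Qed.

Lemma event_forall_seq (T : eqType) (s : seq T) (E : T -> Omega -> Prop) :
  (forall x, Ev (E x)) -> Ev (fun w => forall x, x \in s -> E x w).
Proof.
move=> hE; elim: s => [|x s IH].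
  by apply: (event_ext _ event_True) => w; split=> // _ x; rewrite in_nil.
apply: (event_ext _ (event_and (hE x) IH)) => w; split.
  by case=> hx hs y; rewrite in_cons => /orP [/eqP ->|]; last exact: hs.
by move=> h; split=> [|y hy]; apply: h; rewrite in_cons ?eqxx ?hy ?orbT.
Qed.

Lemma event_forall_fin (T : finType) (E : T -> Omega -> Prop) :
  (forall x, Ev (E x)) -> Ev (fun w => forall x, E x w).
Proof.
move=> hE; apply: (event_ext _ (event_forall_seq (enum T) hE)) => w.
by split=> h x //; apply: h; rewrite mem_enum.
Qed.

(* The rationals (a - b) / (c + 1) are dense in the reals; they index the countable
   union expressing a strict inequality between two random variables. *)
Definition ratio (a b c : nat) : R := (INR a - INR b) / INR c.+1.

Lemma IZR_nat_diff (z : Z) : exists a b, IZR z = INR a - INR b.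
Proof.
case: z => [|p|p] /=.
- by exists 0%N, 0%N; rewrite /=; lra.
- by exists (Pos.to_nat p), 0%N; rewrite INR_IPR /IZR /=; lra.
- by exists 0%N, (Pos.to_nat p); rewrite INR_IPR /IZR /=; lra.
Qed.

Lemma ratio_dense (u v : R) : u < v -> exists a b c, u < ratio a b c < v.
Proof.
move=> huv; have [c hc] := INR_archimed (v - u) 1 ltac:(lra).
have hd : 0 < INR c.+1 by apply: lt_0_INR; apply/ltP.
have hcd : INR c <= INR c.+1 by rewrite S_INR; lra.
have hvd : 1 < (v - u) * INR c.+1 by nra.
have [hz1 hz2] := archimed (u * INR c.+1).
have [a [b hab]] := IZR_nat_diff (up (u * INR c.+1)).
exists a, b, c; rewrite /ratio -hab.
have hr : IZR (up (u * INR c.+1)) / INR c.+1 * INR c.+1 = IZR (up (u * INR c.+1)).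
  by field; lra.
split; apply: (Rmult_lt_reg_r (INR c.+1)) => //; lra.
Qed.

Lemma event_lt (U V : Omega -> R) :
  random_variable Ev U -> random_variable Ev V -> Ev (fun w => U w < V w).
Proof.
move=> hU hV.
pose E a b c w := U w <= ratio a b c /\ ~ V w <= ratio a b c.
have hE : Ev (fun w => exists a b c, E a b c w).
  do 3![apply: event_exists => ?]; exact: event_and (hU _) (event_not (hV _)).
apply: (event_ext _ hE) => w; split; first by case=> a [b [c]] /=; rewrite /E; lra.
by move=> /ratio_dense [a [b [c hr]]]; exists a, b, c; rewrite /E; lra.
Qed.

End Events.

Section Probability.
Variables (Omega : Type) (Ev : (Omega -> Prop) -> Prop) (P : (Omega -> Prop) -> R).
Hypothesis probP : probability Ev P.

Lemma sigma_of_probability : sigma_algebra Ev.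
Proof. by case: probP. Qed.

Lemma P_ge0 (E : Omega -> Prop) : Ev E -> 0 <= P E.
Proof. by case: probP => _ [h _]; apply: h. Qed.

(* The series of a constant c converges only if c = 0, so countable additivity
   applied to the constant family of empty events forces P(empty) = 0. *)
Lemma P_empty : P (fun _ => False) = 0.
Proof.
case: probP => _ [_ [_ hadd]].
have := hadd (fun _ _ => False) (fun _ => event_False sigma_of_probability).
rewrite (@pred_ext _ (fun w => exists k : nat, False) (fun _ => False)); last first.
  by move=> w; split=> // [[]].
set c := P _ => /(_ (fun _ _ _ _ h _ => h)) hs.
have hsum m : sum_f_R0 (fun _ => c) m = INR m.+1 * c.
  elim: m => [|m IH]; first by rewrite /= Rmult_1_l.
  by rewrite /= IH; rewrite -/(INR m.+2) (S_INR m.+1); ring.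
case: (Req_dec c 0) => // hc0.
have [N HN] := hs _ (Rabs_pos_lt _ hc0).
have := HN N.+1 ltac:(apply/leP; exact: leqnSn).
rewrite /R_dist hsum.
have -> : INR N.+2 * c - c = INR N.+1 * c by rewrite (S_INR N.+1); ring.
rewrite Rabs_mult Rabs_pos_eq; last exact: pos_INR.
have : 1 <= INR N.+1 by rewrite S_INR; have := pos_INR N; lra.
have := Rabs_pos c; nra.
Qed.

Lemma P_union2 (A B : Omega -> Prop) : Ev A -> Ev B ->
  (forall w, A w -> B w -> False) -> P (fun w => A w \/ B w) = P A + P B.
Proof.
move=> hA hB hAB; case: probP => hS [_ [_ hadd]].
pose E k := match k with 0%N => A | 1%N => B | _ => fun _ => False end.
have hE k : Ev (E k) by case: k => [|[|k]] //; exact: event_False.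
have hd k l w : k <> l -> E k w -> E l w -> False.
  by case: k => [|[|k]]; case: l => [|[|l]] //= _ ? ?; apply: (hAB w).
have := hadd E hE hd.
rewrite (@pred_ext _ (fun w => exists k, E k w) (fun w => A w \/ B w)); last first.
  move=> w; split; first by case=> [[|[|k]]] //= h; [left|right].
  by case=> h; [exists 0%N | exists 1%N].
move=> hsum; apply: (uniqueness_sum _ _ _ hsum) => eps heps.
exists 1%N => m /leP hm.
have -> : sum_f_R0 (fun k => P (E k)) m = P A + P B.
  elim: m hm => [|[|m] IH] hm //=; rewrite /= in IH; rewrite IH ?P_empty //; ring.
by rewrite /R_dist Rminus_diag Rabs_R0.
Qed.

End Probability.

Lemma Rplus_assoc_law : associative Rplus.
Proof. by move=> x y z; ring. Qed.
Lemma Rplus_0_law : left_id R0 Rplus.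
Proof. by move=> x; ring. Qed.
Lemma Rmult_0_l_law : left_zero R0 Rmult.
Proof. by move=> x; ring. Qed.
Lemma Rmult_0_r_law : right_zero R0 Rmult.
Proof. by move=> x; ring. Qed.
Lemma Rmult_plus_l_law : left_distributive Rmult Rplus.
Proof. by move=> x y z; ring. Qed.
Lemma Rmult_plus_r_law : right_distributive Rmult Rplus.
Proof. by move=> x y z; ring. Qed.

HB.instance Definition _ :=
  Monoid.isComLaw.Build R R0 Rplus Rplus_assoc_law Rplus_comm Rplus_0_law.
HB.instance Definition _ := Monoid.isMulLaw.Build R R0 Rmult Rmult_0_l_law Rmult_0_r_law.
HB.instance Definition _ :=
  Monoid.isAddLaw.Build R Rmult Rplus Rmult_plus_l_law Rmult_plus_r_law.

(* Events determined by a finite-valued observation f : the fibres {f = k} partition Omega,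
   and any event invariant under f is a union of fibres. *)
Section FinitePartition.
Variables (Omega : Type) (Ev : (Omega -> Prop) -> Prop) (P : (Omega -> Prop) -> R).
Hypothesis probP : probability Ev P.
Variables (K : finType) (f : Omega -> K).
Hypothesis fibre_event : forall k, Ev (fun w => f w = k).

Definition f_invariant (E : Omega -> Prop) : Prop :=
  forall w w', f w = f w' -> E w -> E w'.

Definition cell (E : Omega -> Prop) (k : K) (w : Omega) : Prop := f w = k /\ E w.

Variable E : Omega -> Prop.
Hypothesis invE : f_invariant E.

Lemma cell_full (w0 : Omega) : E w0 -> cell E (f w0) = (fun w => f w = f w0).
Proof.
move=> hE; apply: pred_ext => w; rewrite /cell; split=> [[] //|hw]; split=> //.
exact: invE hE.
Qed.

Lemma cell_void (k : K) : ~ (exists w, cell E k w) -> cell E k = (fun _ => False).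
Proof. by move=> hno; apply: pred_ext => w; split=> // hw; apply: hno; exists w. Qed.

Lemma cell_event (k : K) : Ev (cell E k).
Proof.
case: (classic (exists w, cell E k w)) => [[w [<- hw]]|hno].
  by rewrite cell_full //; apply: fibre_event.
by rewrite cell_void //; apply: event_False (sigma_of_probability probP).
Qed.

Lemma P_cell (w0 : Omega) (b : bool) : (E w0 <-> b) ->
  P (cell E (f w0)) = b2R b * P (fun w => f w = f w0).
Proof.
case: b => hb; first by rewrite (cell_full (proj2 hb isT)) /b2R /=; ring.
rewrite cell_void ?(P_empty probP) // /b2R /=; first ring.
by case=> w [hw /(invE hw)] /hb.
Qed.

Lemma P_cell_null (k : K) : P (fun w => f w = k) = 0 -> P (cell E k) = 0.
Proof.
case: (classic (exists w, cell E k w)) => [[w [<- hw]]|hno] h0.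
  by rewrite cell_full.
by rewrite cell_void ?(P_empty probP).
Qed.

Lemma P_cells_seq (s : seq K) : uniq s ->
  Ev (fun w => f w \in s /\ E w) /\
  P (fun w => f w \in s /\ E w) = \big[Rplus/R0]_(k <- s) P (cell E k).
Proof.
have hS := sigma_of_probability probP.
elim: s => [|k s IH] /=.
  have -> : (fun w => f w \in [::] /\ E w) = (fun _ => False).
    by apply: pred_ext => w; rewrite in_nil; split=> // -[].
  by rewrite big_nil (P_empty probP); split=> //; apply: event_False.
move=> /andP [hks /IH [hEs hPs]].
have -> : (fun w => f w \in k :: s /\ E w) = (fun w => cell E k w \/ (f w \in s /\ E w)).
  apply: pred_ext => w; rewrite in_cons /cell; split.
    by case=> /orP [/eqP|] ? ?; [left|right].
  by case=> [[-> ?]|[hs ?]]; split; rewrite ?eqxx ?hs ?orbT.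
split; first exact: event_or (cell_event k) hEs.
rewrite big_cons -hPs; apply: (P_union2 probP (cell_event k) hEs).
by move=> w [-> _] [hs _]; rewrite hs in hks.
Qed.

Lemma P_cells : P E = \big[Rplus/R0]_(k : K) P (cell E k).
Proof.
have [_ <-] := P_cells_seq (index_enum_uniq K).
by congr P; apply: pred_ext => w; rewrite mem_index_enum; split=> [|[]].
Qed.

Lemma null_fibre (w0 : Omega) : P E = 0 -> E w0 -> P (fun w => f w = f w0) = 0.
Proof.
move=> h0 hw0; move: h0; rewrite P_cells (bigD1 (f w0)) //= cell_full //.
have hrest : 0 <= \big[Rplus/R0]_(k | k != f w0) P (cell E k).
  apply: (big_ind (fun x => 0 <= x)) => [|x y|k _]; [lra | lra |].
  exact: P_ge0 (cell_event k).
by have := P_ge0 probP (fibre_event (f w0)); lra.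
Qed.

End FinitePartition.

Lemma finite_argmax (T : eqType) (s : seq T) (p : pred T) (g : T -> R) (a0 : T) :
  p a0 -> exists a, p a /\ forall b, b \in s -> p b -> g b <= g a.
Proof.
move=> pa0; elim: s => [|x s [a [pa ha]]]; first by exists a0.
case: (boolP (p x)) => px; last first.
  by exists a; split=> // b; rewrite in_cons => /orP [/eqP ->|/ha //]; rewrite (negbTE px).
case: (Rle_dec (g x) (g a)) => hxa.
  by exists a; split=> // b; rewrite in_cons => /orP [/eqP -> //|/ha].
exists x; split=> // b; rewrite in_cons => /orP [/eqP -> _|hb pb]; first lra.
by have := ha b hb pb; lra.
Qed.
Arguments finite_argmax {T} s p g a0 _.

Lemma finite_gap (T : eqType) (s : seq T) (g : T -> R) (x : R) :
  exists y, x < y /\ forall b, b \in s -> x < g b -> y <= g b.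
Proof.
elim: s => [|a s [y [hxy hy]]]; first by exists (x + 1); split=> [|b]; [lra | rewrite in_nil].
case: (Rlt_le_dec x (g a)) => hxa.
  exists (Rmin y (g a)); split; first exact: Rmin_glb_lt.
  move=> b; rewrite in_cons => /orP [/eqP -> _|hb hxb]; first exact: Rmin_r.
  exact: Rle_trans (Rmin_l _ _) (hy b hb hxb).
exists y; split=> // b; rewrite in_cons => /orP [/eqP -> |]; [lra | exact: hy].
Qed.

(* The only times at which
   the set of working components can change are 0 and the component lifetimes; these
   "critical values" are indexed by option 'I_n (None standing for time 0). *)
Section Lifetime.
Variables (Omega : Type) (n : nat) (X : 'I_n -> Omega -> R).

Definition crit (a : option 'I_n) (w : Omega) : R := if a is Some i then X i w else 0.

Definition working (w : Omega) (t : R) : {set 'I_n} :=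
  [set i : 'I_n | Rlt_dec t (X i w) : bool].

Lemma in_working (w : Omega) (t : R) (i : 'I_n) : i \in working w t <-> t < X i w.
Proof. by rewrite inE; case: Rlt_dec. Qed.

Definition no_tie_at (w : Omega) (j : 'I_n) : Prop := forall i, i != j -> X i w <> X j w.

Hypothesis X_ge0 : forall i w, 0 <= X i w.

Lemma crit_ge0 (a : option 'I_n) (w : Omega) : 0 <= crit a w.
Proof. by case: a => [i|] /=; [apply: X_ge0 | lra]. Qed.

Lemma working_step (w : Omega) (t : R) : 0 <= t ->
  exists a, crit a w <= t /\ working w t = working w (crit a w).
Proof.
move=> ht; have [a [ha hmax]] := finite_argmax (enum {: option 'I_n})
  (fun a => Rle_dec (crit a w) t : bool) (fun a => crit a w) None
  ltac:(by rewrite /=; case: Rle_dec).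
move: ha => /=; case: Rle_dec => // ha _; exists a; split=> //.
apply/setP => i; apply/idP/idP => /in_working hi; apply/in_working; first lra.
apply: Rnot_le_lt => hit.
by move: (hmax (Some i) (mem_enum _ (Some i))) => /=; case: Rle_dec => //= _ /(_ isT); lra.
Qed.

Lemma working_before (w : Omega) (j : 'I_n) : no_tie_at w j -> 0 < X j w ->
  exists a, crit a w < X j w /\ working w (crit a w) = j |: working w (X j w).
Proof.
move=> hnt hj; have [a [ha hmax]] := finite_argmax (enum {: option 'I_n})
  (fun a => Rlt_dec (crit a w) (X j w) : bool) (fun a => crit a w) None
  ltac:(by rewrite /=; case: Rlt_dec).
move: ha => /=; case: Rlt_dec => // ha _; exists a; split=> //.
apply/setP => i; rewrite in_setU1; apply/idP/idP.
  move=> /in_working hai; case: (eqVneq i j) => //= hij; apply/in_working.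
  case: (Rlt_le_dec (X j w) (X i w)) => // hle.
  have hlt : X i w < X j w by have := hnt i hij; lra.
  by move: (hmax (Some i) (mem_enum _ (Some i))) => /=; case: Rlt_dec => //= _ /(_ isT); lra.
by case/orP => [/eqP ->|/in_working hi]; apply/in_working; lra.
Qed.

Variable phi : {set 'I_n} -> bool.
Hypothesis semi : semicoherent phi.

Lemma phi_mono (A B : {set 'I_n}) : A \subset B -> phi A -> phi B.
Proof. by case: semi => h _; apply: h. Qed.

(* The infimum of the failure times is attained: T = x iff the system works on [0, x)
   and has failed at x. *)
Lemma lifetime_char (w : Omega) (x : R) : lifetime_is phi X w x <->
  0 <= x /\ phi (working w x) = false /\ forall t, 0 <= t < x -> phi (working w t).
Proof.
split.
- case=> hlb hgr; have hx0 : 0 <= x by apply: hgr => t [].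
  have hbefore t : 0 <= t < x -> phi (working w t).
    by move=> ht; apply/negPn/negP => /negbTE hf; have := hlb t (conj (proj1 ht) hf); lra.
  do 2!split=> //; apply/negbTE/negP => hx.
  have [y [hxy hgap]] := finite_gap (enum 'I_n) (fun i => X i w) x.
  have hmid : (x + y) / 2 <= x.
    apply: hgr => t [ht0 hft]; apply: Rnot_lt_le => ht.
    have hxt : x <= t by apply: hlb.
    suff : phi (working w t) by rewrite hft.
    apply: phi_mono hx; apply/subsetP => i /in_working hi; apply/in_working.
    by have := hgap i (mem_enum _ i) hi; lra.
  lra.
- case=> hx0 [hfx hbefore]; split.
    move=> t [ht0 hft]; apply: Rnot_lt_le => htx.
    by have := hbefore t (conj ht0 htx); rewrite hft.
  by move=> m hm; apply: hm.
Qed.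

Lemma lifetime_crit (w : Omega) (j : 'I_n) : lifetime_is phi X w (X j w) <->
  phi (working w (X j w)) = false /\
  forall a, crit a w < X j w -> phi (working w (crit a w)).
Proof.
rewrite lifetime_char; split.
  case=> _ [hfail hbefore]; split=> // a ha.
  by apply: hbefore; split=> //; apply: crit_ge0.
case=> hfail hcrit; split; first exact: X_ge0.
split=> // t [ht0 htj]; have [a [hat ->]] := working_step w ht0.
by apply: hcrit; lra.
Qed.

Lemma lifetime_no_tie (w : Omega) (j : 'I_n) : no_tie_at w j ->
  lifetime_is phi X w (X j w) <->
  phi (j |: working w (X j w)) && ~~ phi (working w (X j w)).
Proof.
move=> hnt; rewrite lifetime_crit; split.
- case=> hfail hcrit; rewrite hfail andbT.
  case: (Rle_lt_or_eq_dec _ _ (X_ge0 j w)) => [hj|hj0].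
    by have [a [ha <-]] := working_before hnt hj; apply: hcrit.
  suff -> : j |: working w (X j w) = setT by case: semi => _ [].
  apply/setP => i; rewrite in_setT in_setU1; case: (eqVneq i j) => //= hij.
  by apply/in_working; have := hnt i hij; have := X_ge0 i w; lra.
- case/andP=> hup /negbTE hfail; split=> // a ha; apply: phi_mono hup.
  apply/subsetP => i; rewrite in_setU1 => /orP [/eqP ->|/in_working hi].
    by apply/in_working.
  by apply/in_working; lra.
Qed.

End Lifetime.

Definition q_event (Omega : Type) (n : nat) (X : 'I_n -> Omega -> R) (j : 'I_n)
  (A : {set 'I_n}) (w : Omega) : Prop :=
  (forall i, i \notin A -> i != j -> X i w < X j w) /\
  (forall i, i \in A -> X j w < X i w).

Lemma q_event_no_tie (Omega : Type) (n : nat) (X : 'I_n -> Omega -> R) (w : Omega)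
  (j : 'I_n) (A : {set 'I_n}) : no_tie_at X w j -> j \notin A ->
  q_event X j A w <-> A = working X w (X j w).
Proof.
move=> hnt hjA; split.
- case=> hout hin; apply/setP => i; apply/idP/idP => [/hin /in_working //|/in_working hi].
  apply/negPn/negP => hiA; case: (eqVneq i j) => [eij|hij]; first by rewrite eij in hi; lra.
  by have := hout i hiA hij; lra.
- move=> ->; split=> [i /negP hiW hij|i /in_working //].
  have := hnt i hij; case: (Rlt_le_dec (X j w) (X i w)) => [hlt|]; last lra.
  by case: hiW; apply/in_working.
Qed.

Section OrderPattern.
Variables (Omega : Type) (n : nat) (X : 'I_n -> Omega -> R).

Definition order_pattern (w : Omega) : {ffun option 'I_n * option 'I_n -> bool} :=
  [ffun ab => Rlt_dec (crit X ab.1 w) (crit X ab.2 w) : bool].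

Section SamePattern.
Variables (w w' : Omega).
Hypothesis same : order_pattern w = order_pattern w'.

Lemma pattern_lt (a b : option 'I_n) : crit X a w < crit X b w <-> crit X a w' < crit X b w'.
Proof.
have := congr1 (fun p : {ffun _ -> bool} => p (a, b)) same; rewrite /= !ffunE /=.
by case: Rlt_dec; case: Rlt_dec.
Qed.

Lemma pattern_working (a : option 'I_n) :
  working X w (crit X a w) = working X w' (crit X a w').
Proof.
apply/setP => i; apply/idP/idP => /in_working hi; apply/in_working.
  by apply/(pattern_lt a (Some i)).
by apply/(pattern_lt a (Some i)).
Qed.

End SamePattern.

Lemma lifetime_pattern_invariant (phi : {set 'I_n} -> bool) (j : 'I_n) :
  semicoherent phi -> (forall i w, 0 <= X i w) ->
  f_invariant order_pattern (fun w => lifetime_is phi X w (X j w)).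
Proof.
move=> semi X_ge0 w w' same; rewrite !(lifetime_crit X_ge0 semi).
rewrite -(pattern_working same (Some j)) => -[hfail hcrit]; split=> // a ha.
by rewrite -(pattern_working same a); apply: hcrit; apply/(pattern_lt same a (Some j)).
Qed.

Lemma q_event_pattern_invariant (j : 'I_n) (A : {set 'I_n}) :
  f_invariant order_pattern (q_event X j A).
Proof.
move=> w w' same [hout hin]; split.
  by move=> i hiA hij; apply/(pattern_lt same (Some i) (Some j)); apply: hout.
by move=> i hiA; apply/(pattern_lt same (Some j) (Some i)); apply: hin.
Qed.

Lemma tie_pattern_invariant (i j : 'I_n) : f_invariant order_pattern (fun w => X i w = X j w).
Proof.
move=> w w' same hij.
have hij' := pattern_lt same (Some i) (Some j); have hji' := pattern_lt same (Some j) (Some i).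
rewrite /= in hij' hji'; apply: Rle_antisym; apply: Rnot_lt_le => hlt.
  by have := proj2 hji' hlt; lra.
by have := proj2 hij' hlt; lra.
Qed.

Variable Ev : (Omega -> Prop) -> Prop.
Hypothesis sigmaEv : sigma_algebra Ev.
Hypothesis X_rv : forall i, random_variable Ev (X i).

Lemma crit_rv (a : option 'I_n) : random_variable Ev (crit X a).
Proof.
case: a => [i|] t /=; first exact: X_rv.
case: (Rle_dec 0 t) => h.
  by apply: (event_ext _ (event_True sigmaEv)).
by apply: (event_ext _ (event_False sigmaEv)).
Qed.

Lemma pattern_event (p : {ffun option 'I_n * option 'I_n -> bool}) :
  Ev (fun w => order_pattern w = p).
Proof.
pose E ab w := (Rlt_dec (crit X ab.1 w) (crit X ab.2 w) : bool) = p ab.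
have hE : Ev (fun w => forall ab, E ab w).
  apply: event_forall_fin => // ab; rewrite /E.
  have hlt := event_lt sigmaEv (crit_rv ab.1) (crit_rv ab.2).
  case: (p ab); first by apply: (event_ext _ hlt) => w; case: Rlt_dec.
  by apply: (event_ext _ (event_not sigmaEv hlt)) => w; case: Rlt_dec.
apply: (event_ext _ hE) => w; rewrite /E; split=> [h|<- ab]; last by rewrite ffunE.
by apply/ffunP => ab; rewrite ffunE.
Qed.

End OrderPattern.
Arguments lifetime_pattern_invariant {Omega n X phi} j.
Arguments q_event_pattern_invariant {Omega n} X j A.
Arguments tie_pattern_invariant {Omega n} X i j.

Definition criticality (n : nat) (phi : {set 'I_n} -> bool) (j : 'I_n) (A : {set 'I_n}) : R :=
  b2R (phi (j |: A)) - b2R (phi A).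

Section FirstFormula.
Variables (Omega : Type) (Ev : (Omega -> Prop) -> Prop) (P : (Omega -> Prop) -> R)
  (n : nat) (phi : {set 'I_n} -> bool) (X : 'I_n -> Omega -> R).
Hypotheses (probP : probability Ev P) (semi : semicoherent phi)
  (X_rv : forall i, random_variable Ev (X i)) (X_ge0 : forall i w, 0 <= X i w)
  (noties : no_ties P X).
Variable j : 'I_n.

Let pattern_fibre := pattern_event (sigma_of_probability probP) X_rv.
Let T_at_j (w : Omega) : Prop := lifetime_is phi X w (X j w).
Let T_inv : f_invariant (order_pattern X) T_at_j :=
  lifetime_pattern_invariant j semi X_ge0.

Lemma tied_pattern_null (w0 : Omega) (i : 'I_n) : i != j -> X i w0 = X j w0 ->
  P (fun w => order_pattern X w = order_pattern X w0) = 0.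
Proof.
move=> hij htie.
apply: (null_fibre probP pattern_fibre (tie_pattern_invariant X i j) _ htie).
by apply: noties; apply/eqP.
Qed.

(* On an untied pattern, exactly one A (the set of components outliving j) carries the
   q_j-event, and the lifetime event holds iff j is critical for that A. *)
Lemma untied_cell_identity (w0 : Omega) : no_tie_at X w0 j ->
  let k := order_pattern X w0 in
  P (cell (order_pattern X) T_at_j k) =
  \big[Rplus/R0]_(A : {set 'I_n} | j \notin A)
     (P (cell (order_pattern X) (q_event X j A) k) * criticality phi j A).
Proof.
move=> hnt k; set A0 := working X w0 (X j w0).
have hjA0 : j \notin A0 by apply/negP => /in_working; lra.
rewrite (bigD1 A0) //= big1 => [|A /andP [hjA hA]]; last first.
  rewrite (P_cell probP (q_event_pattern_invariant X j A) (b := false)) /b2R /=; first ring.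
  by rewrite (q_event_no_tie hnt hjA); split=> // eA; rewrite eA eqxx in hA.
rewrite (P_cell probP T_inv (b := phi (j |: A0) && ~~ phi A0)); last exact: lifetime_no_tie.
rewrite (P_cell probP (q_event_pattern_invariant X j A0) (b := true)); last first.
  by rewrite q_event_no_tie.
have hmono : phi A0 -> phi (j |: A0) := phi_mono semi (subsetUr [set j] A0).
rewrite /criticality /b2R /=.
by case: (phi A0) hmono; case: (phi (j |: A0)) => //= hm; first [ring | have := hm isT].
Qed.

Lemma cell_identity (k : {ffun option 'I_n * option 'I_n -> bool}) :
  P (cell (order_pattern X) T_at_j k) =
  \big[Rplus/R0]_(A : {set 'I_n} | j \notin A)
     (P (cell (order_pattern X) (q_event X j A) k) * criticality phi j A).
Proof.
case: (classic (exists w, order_pattern X w = k)) => [[w0 <-]|hno]; last first.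
  have hvoid E : P (cell (order_pattern X) E k) = 0.
    by rewrite cell_void ?(P_empty probP) // => -[w [hw _]]; apply: hno; exists w.
  by rewrite hvoid big1 // => A _; rewrite hvoid; ring.
case: (classic (no_tie_at X w0 j)) => [|htie]; first exact: untied_cell_identity.
have [i [hij hi]] : exists i, i != j /\ X i w0 = X j w0.
  by apply: NNPP => hno; apply: htie => i hij hi; apply: hno; exists i.
have hnull := tied_pattern_null hij hi.
rewrite (P_cell_null probP T_inv hnull) big1 // => A _.
by rewrite (P_cell_null probP (q_event_pattern_invariant X j A) hnull); ring.
Qed.

Lemma first_formula : P T_at_j =
  \big[Rplus/R0]_(A : {set 'I_n} | j \notin A) (q P X j A * criticality phi j A).
Proof.
rewrite (P_cells probP pattern_fibre T_inv).
under eq_bigr => k _ do rewrite cell_identity.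
rewrite exchange_big /=; apply: eq_bigr => A _.
by rewrite -big_distrl /= -(P_cells probP pattern_fibre (q_event_pattern_invariant X j A)).
Qed.

End FirstFormula.

(* The second formula is a reindexing of the first: split the sum over all subsets
   according to whether j belongs to A and pair A with A + j. *)
Lemma signed_sum_criticality (n : nat) (j : 'I_n) (qf : {set 'I_n} -> R)
  (phi : {set 'I_n} -> bool) :
  \big[Rplus/R0]_(A : {set 'I_n})
     (pow (Ropp R1) #|[set j] :\: A| * qf (A :\ j) * b2R (phi A)) =
  \big[Rplus/R0]_(A : {set 'I_n} | j \notin A) (qf A * criticality phi j A).
Proof.
rewrite (bigID (fun A : {set 'I_n} => j \in A)) /=.
rewrite (reindex_onto (fun B => j |: B) (fun A => A :\ j)) /=; last first.
  by move=> A hA; rewrite setD1K.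
have hidx (B : {set 'I_n}) : (j \in j |: B) && ((j |: B) :\ j == B) = (j \notin B).
  rewrite setU11 /=; apply/eqP/idP => [<-|]; [by rewrite setD11 | exact: setU1K].
rewrite (eq_bigl _ _ hidx) -big_split /=; apply: eq_bigr => B hB.
have -> : [set j] :\: (j |: B) = set0.
  by apply/setP => i; rewrite !inE; case: (i == j); rewrite /= ?andbF.
have -> : [set j] :\: B = [set j].
  by apply/setP => i; rewrite !inE; case: eqP => [->|_] /=; rewrite ?andbF ?andbT ?hB.
have -> : B :\ j = B.
  by apply/setP => i; rewrite !inE; case: eqP => // ->; rewrite (negbTE hB).
rewrite setU1K // cards0 cards1 /criticality /=; ring.
Qed.

Theorem theorem3 (Omega : Type) (Ev : (Omega -> Prop) -> Prop)
  (P : (Omega -> Prop) -> R) (n : nat) (phi : {set 'I_n} -> bool)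
  (X : 'I_n -> Omega -> R) :
  probability Ev P ->
  semicoherent phi ->
  (forall i, random_variable Ev (X i)) ->
  (forall i w, Rle R0 (X i w)) ->
  no_ties P X ->
  forall j : 'I_n,
    P (fun w => lifetime_is phi X w (X j w)) =
      \big[Rplus/R0]_(A : {set 'I_n} | j \notin A)
         Rmult (q P X j A) (Rminus (b2R (phi (j |: A))) (b2R (phi A)))
  /\
    P (fun w => lifetime_is phi X w (X j w)) =
      \big[Rplus/R0]_(A : {set 'I_n})
         Rmult (Rmult (pow (Ropp R1) #|[set j] :\: A|) (q P X j (A :\ j))) (b2R (phi A)).
Proof.
move=> probP semi X_rv X_ge0 noties j.
have hfirst := first_formula probP semi X_rv X_ge0 noties j.
by split; rewrite // signed_sum_criticality.
Qed.
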